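(* Let $m>1$ and $a\in\mathbb{Z}_m$ with $2a^2-2a+1\equiv0\pmod m$, and let $(\mathbb{Z}_m,\cdot)$ be the quadratical quasigroup $x\cdot y=ax+(1-a)y\pmod m$. Then there is exactly one $k\in\{1,\dots,m-1\}$ such that $(\mathbb{Z}_m,\cdot)$ is $k$-translatable with respect to the ordering $0,1,\dots,m-1$; this $k$ is the solution of $(a-1)k\equiv a\pmod m$, and it satisfies $1<k<m-1$.
   Context: Every quadratical quasigroup induced by the additive group $\mathbb{Z}_m$ has this form. A finite groupoid with ordering $q_1,\dots,q_n$ is $k$-translatable ($1\le k<n$) with respect to this ordering if $q_i\cdot q_j=q_{i-1}\cdot q_{j-k}$ for all $i\in\{2,\dots,n\}$, $j\in\{1,\dots,n\}$, indices taken modulo $n$ in $\{1,\dots,n\}$. *)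

(* all arithmetic in int, residues mod m represented by
   their canonical representatives in [0, m). *)
From mathcomp Require Import all_boot all_order all_algebra.
Set Implicit Arguments. Unset Strict Implicit. Unset Printing Implicit Defensive.
Import Order.TTheory GRing.Theory Num.Theory.
Local Open Scope ring_scope.

Definition zop (m : nat) (a : int) (x y : int) : int :=
  ((a * x + (1 - a) * y) %% (m%:Z))%Z.

Definition idxmod (n : nat) (i : int) : int := ((i - 1) %% (n%:Z))%Z + 1.

Definition k_translatable (T : Type) (n : nat) (mul : T -> T -> T)
    (q : int -> T) (k : int) : Prop :=
  forall i j : int, 2 <= i <= n%:Z -> 1 <= j <= n%:Z ->
    mul (q i) (q j) = mul (q (idxmod n (i - 1))) (q (idxmod n (j - k))).

Definition natural_order (i : int) : int := i - 1.

(* With q_i = i - 1, the identity q_i . q_j = q_(i-1) . q_(j-k) reduces for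
   every i, j to the single congruence a + (1 - a) k = 0 (mod m), that is
   (a - 1) k = a.  Since 2a^2 - 2a + 1 = 0 (mod m), the element a - 1 is a
   unit with inverse -2a, so this congruence has the unique solution
   k = 1 - 2a.  Finally 1 - 2a is neither 0, 1 nor -1 modulo m, as each of
   these would combine with 2a^2 - 2a + 1 into 1 = 0 (mod m). *)
From mathcomp Require Import all_boot all_order all_algebra.
From mathcomp Require Import ring zify.
Import Order.TTheory GRing.Theory Num.Theory.
Local Open Scope ring_scope.

Lemma eqz_modP (d x y : int) : reflect (x = y %[mod d])%Z (d %| x - y)%Z.
Proof. by rewrite -eqz_mod_dvd; apply: eqP. Qed.

Lemma dvdz_lincomb {d x y z : int} (c1 c2 : int) :
  (d %| x)%Z -> (d %| y)%Z -> z = c1 * x + c2 * y -> (d %| z)%Z.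
Proof. by move=> dx dy ->; rewrite rpredD ?dvdz_mull. Qed.

Lemma natural_order_idxmod (n : nat) (i : int) :
  (natural_order (idxmod n i) = i - 1 %[mod n])%Z.
Proof. by rewrite /natural_order /idxmod addrK modz_mod. Qed.

Lemma zop_mod (m : nat) (a x x' y y' : int) :
  (x = x' %[mod m])%Z -> (y = y' %[mod m])%Z -> zop m a x y = zop m a x' y'.
Proof.
move=> /eqz_modP dx /eqz_modP dy; apply/eqz_modP.
by apply: (dvdz_lincomb a (1 - a) dx dy); ring.
Qed.

Lemma zop_translate (m : nat) (a x y k : int) :
  zop m a x y = zop m a (x - 1) (y - k) <-> ((a - 1) * k = a %[mod m])%Z.
Proof.
by rewrite /zop; split=> /eqz_modP dvd_diff; apply/eqz_modP;
  apply: (dvdz_lincomb (-1) 0 dvd_diff (dvdz0 _)); ring.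
Qed.

Lemma k_translatable_zopP (m : nat) (a k : int) : (1 < m)%N ->
  k_translatable m (zop m a) natural_order k <-> ((a - 1) * k = a %[mod m])%Z.
Proof.
move=> m_gt1.
have reindex i j : zop m a (natural_order (idxmod m (i - 1)))
                           (natural_order (idxmod m (j - k)))
                   = zop m a (natural_order i - 1) (natural_order j - k).
  apply: zop_mod; rewrite natural_order_idxmod /natural_order //.
  by rewrite (_ : j - k - 1 = j - 1 - k) //; ring.
split=> [transl | sol i j _ _]; last by rewrite reindex; apply/zop_translate.
apply/(zop_translate _ _ (natural_order 2) (natural_order 1)); rewrite -reindex.
by apply: transl; lia.
Qed.

Lemma residue_interior (M k : int) : 0 <= k < M ->
  (k != 0 %[mod M])%Z -> (k != 1 %[mod M])%Z -> (k != -1 %[mod M])%Z ->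
  1 < k < M - 1.
Proof.
move=> k_range; rewrite (modz_small k_range) mod0z => k_neq0.
have M_gt1 : 1 < M by lia.
have modN1 : ((-1) %% M)%Z = M - 1 by rewrite -modzDl modz_small //; lia.
by rewrite modN1 modz_small //; lia.
Qed.

Section QuadraticalModulus.

Variables (M a : int).
Hypothesis M_gt1 : 1 < M.
Hypothesis quadratical : (2 * a ^+ 2 - 2 * a + 1 = 0 %[mod M])%Z.

Let dvd_quadratical : (M %| 2 * a ^+ 2 - 2 * a + 1)%Z.
Proof. by move/eqz_modP: quadratical; rewrite subr0. Qed.

Lemma translation_root : ((a - 1) * (1 - 2 * a) = a %[mod M])%Z.
Proof.
by apply/eqz_modP; apply: (dvdz_lincomb (-1) 0 dvd_quadratical (dvdz0 M)); ring.
Qed.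

Lemma translation_root_uniq (k k' : int) :
  ((a - 1) * k = a %[mod M])%Z -> ((a - 1) * k' = a %[mod M])%Z ->
  (k = k' %[mod M])%Z.
Proof.
move=> /eqz_modP sol /eqz_modP sol'; apply/eqz_modP.
(* (a - 1) (-2a) = 1 - (2a^2 - 2a + 1) *)
by apply: (dvdz_lincomb (-2 * a) (k - k') (rpredB sol sol') dvd_quadratical); ring.
Qed.

Lemma translation_root_nontrivial :
  [/\ (1 - 2 * a != 0 %[mod M])%Z, (1 - 2 * a != 1 %[mod M])%Z
    & (1 - 2 * a != -1 %[mod M])%Z].
Proof.
have ndvdz1 : ~~ (M %| 1)%Z by rewrite dvdz1; lia.
rewrite !eqz_mod_dvd; split; apply: contra ndvdz1 => dvd_root.
- by apply: (dvdz_lincomb 2 (2 * a - 1) dvd_quadratical dvd_root); ring.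
- by apply: (dvdz_lincomb 1 (a - 1) dvd_quadratical dvd_root); ring.
- by apply: (dvdz_lincomb 1 a dvd_quadratical dvd_root); ring.
Qed.

End QuadraticalModulus.

Theorem theorem9p3 (m : nat) (a : int) :
  (1 < m)%N -> 0 <= a < m%:Z ->
  (2 * a ^+ 2 - 2 * a + 1 = 0 %[mod m%:Z])%Z ->
  exists k : int,
    [/\ 1 <= k <= m%:Z - 1 /\ 1 < k < m%:Z - 1,
        k_translatable m (zop m a) natural_order k,
        (forall k' : int, 1 <= k' <= m%:Z - 1 ->
           k_translatable m (zop m a) natural_order k' -> k' = k),
        ((a - 1) * k = a %[mod m%:Z])%Z
      & (forall k' : int, 1 <= k' <= m%:Z - 1 ->
           ((a - 1) * k' = a %[mod m%:Z])%Z -> k' = k)].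
Proof.
move=> m_gt1 _ quadratical.
have M_gt1 : 1 < m%:Z by rewrite ltz_nat.
pose k := ((1 - 2 * a) %% m)%Z.
have k_range : 0 <= k < m by rewrite modz_ge0 ?ltz_pmod //; lia.
have k_root : ((a - 1) * k = a %[mod m])%Z.
  by rewrite modzMmr; apply: translation_root.
have k_uniq k' : 1 <= k' <= m%:Z - 1 -> ((a - 1) * k' = a %[mod m])%Z -> k' = k.
  move=> k'_range k'_root; have k'_small : 0 <= k' < m by lia.
  rewrite -(modz_small k'_small) -(modz_small k_range).
  exact: translation_root_uniq k'_root k_root.
have [root_neq0 root_neq1 root_neqN1] :=
  translation_root_nontrivial _ _ M_gt1 quadratical.
have k_interior : 1 < k < m%:Z - 1 by apply: residue_interior; rewrite ?modz_mod.
exists k; split.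
- by split; [lia | exact: k_interior].
- exact/k_translatable_zopP.
- by move=> k' k'_range /k_translatable_zopP-/(_ m_gt1); apply: k_uniq.
- exact: k_root.
- exact: k_uniq.
Qed.
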